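(* For $n>2$, the polytope $P(D_n)$ has a regular triangulation all of whose maximal simplices are unimodular with respect to the affine lattice spanned by the vertices of $P(D_n)$.
   Context: Each $g\in S_n$ is identified with its $n\times n$ permutation matrix (entry $(i,j)$ is $1$ iff $g(i)=j$); $P(G)=\mathrm{conv}\{g:g\in G\}$. $D_n\le S_n$ is generated by $r=(1\ 2\ \cdots\ n)$ and $f=(1\ n)(2\ n-1)\cdots(\lfloor\frac{n+1}{2}\rfloor\ \lceil\frac{n+1}{2}\rceil)$. A simplex with vertices $w_1,\dots,w_m$ in an affine lattice $L$ is unimodular in $L$ if $\{w_m-w_1,\dots,w_2-w_1\}$ is a basis of (the linear lattice underlying) $L$. *)

From HB Require Import structures.
From mathcomp Require Import all_boot all_order all_algebra all_fingroup.
From mathcomp Require Import reals.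
Set Implicit Arguments. Unset Strict Implicit. Unset Printing Implicit Defensive.
Import Order.TTheory GRing.Theory Num.Theory.
Local Open Scope ring_scope.

(* Indices {1,...,n} of the paper are 'I_n = {0,...,n-1} here. *)

Definition rot_perm (n : nat) : 'S_n := perm (@ordS_inj n).
(* f : i |-> n+1-i (paper indexing), i.e. i |-> n-1-i on 'I_n *)
Definition flip_perm (n : nat) : 'S_n := perm (@rev_ord_inj n).

Definition dihedral (n : nat) : {group 'S_n} :=
  <<[set rot_perm n; flip_perm n]>>%G.

(* The permutation matrix of g: entry (i,j) is 1 iff g i = j
   (perm_mx g = row_perm g 1, so (perm_mx g) i j = (g i == j)%:R). *)
Definition pmx (R : realType) (n : nat) (g : 'S_n) : 'M[R]_n := perm_mx g.

Definition affine_fun (R : realType) (n : nat) (C : 'M[R]_n) (c0 : R)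
  (X : 'M[R]_n) : R := \sum_i \sum_j C i j * X i j + c0.

Section Geometry.
Variables (R : realType) (n : nat).
Implicit Types (G S : {set 'S_n}) (h : 'S_n -> R).

Definition aff_indep S : Prop :=
  forall a : 'S_n -> R,
    \sum_(g in S) a g = 0 ->
    \sum_(g in S) a g *: pmx R g = 0 ->
    forall g, g \in S -> a g = 0.

(* A cell of the regular subdivision of the point configuration
   {pmx g | g in G} induced by the heights h: the set of points at which
   some affine function lying weakly below the heights on all points
   touches the heights (a lower face of the lifted configuration). *)
Definition lower_cell G h S : Prop :=
  S \subset G /\
  exists (C : 'M[R]_n) (c0 : R),
    forall g, g \in G ->
      affine_fun C c0 (pmx R g) <= h g /\
      (affine_fun C c0 (pmx R g) = h g <-> g \in S).

Definition regular_triangulation G h : Prop :=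
  forall S, lower_cell G h S -> aff_indep S.

(* S spans the affine hull of the configuration G (i.e. it is a
   full-dimensional, hence maximal, cell). *)
Definition spans_aff_hull G S : Prop :=
  forall g, g \in G ->
    exists a : 'S_n -> R,
      \sum_(s in S) a s = 1 /\ pmx R g = \sum_(s in S) a s *: pmx R s.

(* The linear lattice underlying the affine lattice spanned by the
   points pmx g, g in G: integer combinations with coefficient sum 0. *)
Definition lin_lattice G (M : 'M[R]_n) : Prop :=
  exists z : 'S_n -> int,
    \sum_(g in G) z g = 0 /\ M = \sum_(g in G) (z g)%:~R *: pmx R g.

(* The simplex with vertices pmx s (s in S) is unimodular in the affine
   lattice spanned by G: for a vertex s1, the vectors pmx s - pmx s1
   (s in S, s <> s1) form a basis of the lattice. *)
Definition unimodular G S : Prop :=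
  exists2 s1, s1 \in S &
    (forall s, s \in S -> lin_lattice G (pmx R s - pmx R s1)) /\
    (forall z : 'S_n -> int,
        \sum_(s in S :\ s1) (z s)%:~R *: (pmx R s - pmx R s1) = 0 ->
        forall s, s \in S :\ s1 -> z s = 0) /\
    (forall M, lin_lattice G M ->
        exists z : 'S_n -> int,
          M = \sum_(s in S :\ s1) (z s)%:~R *: (pmx R s - pmx R s1)).

End Geometry.

From HB Require Import structures.
From mathcomp Require Import all_boot all_order all_algebra all_fingroup.
From mathcomp Require Import reals ring zify.
Set Implicit Arguments. Unset Strict Implicit. Unset Printing Implicit Defensive.
Import Order.TTheory GRing.Theory Num.Theory.
Local Open Scope ring_scope.

(* Write D_n as the rotations x |-> x + a and the reflections x |-> a - x of
   Z/n; lift rotations to height 1 and reflections to height 0.  The entry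
   (i, j) of a matrix of D_n is 1 exactly for the rotation by j - i and the
   reflection in i + j, so a linear dependence b among these matrices
   satisfies b(ref c) = - b(rot c) and b(rot (j - i)) = b(rot (i + j)); thus
   b is constant on the rotations by a coset of 2Z/n.  Rotations and
   reflections by such a coset have the same matrix sum, so an affine function
   below the heights cannot be tight on all these rotations: every cell misses
   a rotation of each coset.  Hence a dependence supported on a cell vanishes,
   and for a full-dimensional cell the affine coordinates of every vertex of
   P(D_n), read off such a dependence, lie in {-1, 0, 1}.  Integer affine
   coordinates of all vertices make the simplex unimodular. *)

Lemma pmxE (R : realType) n (g : 'S_n) i j : pmx R g i j = (g i == j)%:R.
Proof. by rewrite /pmx /perm_mx /row_perm !mxE. Qed.

Lemma sum_if_eq (T : finType) (V : nmodType) (A : {pred T}) x (F : T -> V) :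
  x \in A -> \sum_(g in A) (if g == x then F g else 0) = F x.
Proof.
by move=> xA; rewrite (bigD1 x) //= eqxx big1 ?addr0 // => g /andP[_ /negPf ->].
Qed.

Lemma sum_if_mem (T : finType) (V : nmodType) (A B : {pred T}) (F : T -> V) :
  {subset B <= A} -> \sum_(g in A) (if g \in B then F g else 0) = \sum_(g in B) F g.
Proof.
move=> sBA; rewrite big_mkcond [RHS]big_mkcond; apply: eq_bigr => g _.
case: (boolP (g \in B)) => gB; first by rewrite sBA.
by case: (g \in A).
Qed.

Lemma sum_indicator (T : finType) (V : pzSemiRingType) (p : pred T) x :
  \sum_(a | p a) ((a == x)%:R : V) = (p x)%:R.
Proof.
case: (boolP (p x)) => px; last first.
  by rewrite big1 // => a pa; have /negPf -> : a != x by apply: contraNneq px => <-.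
by rewrite (bigD1 x) //= eqxx big1 ?addr0 // => a /andP[_ /negPf ->].
Qed.

Lemma sum_affine_fun (R : realType) n (T : finType) (P : pred T) C c0
    (X : T -> 'M[R]_n) :
  \sum_(k | P k) affine_fun C c0 (X k) =
  affine_fun C (\sum_(k | P k) c0) (\sum_(k | P k) X k).
Proof.
rewrite /affine_fun big_split /=; congr (_ + _).
rewrite exchange_big; apply: eq_bigr => i _; rewrite exchange_big; apply: eq_bigr => j _.
by rewrite summxE mulr_sumr.
Qed.

Section AffineLattice.
Variables (R : realType) (n : nat).
Local Notation pm := (pmx R).
Implicit Types (G S : {set 'S_n}) (c : 'S_n -> R) (z : 'S_n -> int).

Lemma sum_scale_diff (A : {pred 'S_n}) c (v : 'M[R]_n) :
  \sum_(s in A) c s *: (pm s - v) = \sum_(s in A) c s *: pm s - (\sum_(s in A) c s) *: v.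
Proof.
rewrite (eq_bigr (fun s => c s *: pm s - c s *: v)) ?sumrB ?scaler_suml //.
by move=> s _; rewrite scalerBr.
Qed.

Lemma intr_sum (A : {pred 'S_n}) z :
  (\sum_(s in A) z s)%:~R = \sum_(s in A) (z s)%:~R :> R.
Proof. exact: rmorph_sum. Qed.

Definition int_affine_comb S (X : 'M[R]_n) : Prop :=
  exists z : 'S_n -> int,
    \sum_(s in S) z s = 1 /\ X = \sum_(s in S) (z s)%:~R *: pm s.

Lemma spans_aff_hull_nonempty G S g :
  g \in G -> spans_aff_hull R G S -> exists s, s \in S.
Proof.
move=> gG /(_ g gG)[a [a1 _]]; case: (set_0Vmem S) => [S0|[s sS]]; last by exists s.
by move: a1; rewrite S0 big_set0 => /eqP; rewrite eq_sym oner_eq0.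
Qed.

Section Unimodular.
Variables (G S : {set 'S_n}) (s1 : 'S_n).
Hypotheses (sSG : S \subset G) (s1S : s1 \in S).

Lemma lin_lattice_pmxB s : s \in G -> lin_lattice G (pm s - pm s1).
Proof.
move=> sG; have s1G := subsetP sSG s1 s1S.
exists (fun g => (if g == s then 1 else 0) - (if g == s1 then 1 else 0)); split.
  by rewrite sumrB !sum_if_eq ?subrr.
rewrite (eq_bigr (fun g => (if g == s then pm g else 0) - (if g == s1 then pm g else 0))).
  by rewrite sumrB !sum_if_eq.
by move=> g _; rewrite intrB scalerBl; do 2 case: eqP => _; rewrite ?scale1r ?scale0r.
Qed.

Lemma aff_indep_diff_free : aff_indep R S ->
  forall c, \sum_(s in S :\ s1) c s *: (pm s - pm s1) = 0 ->
  forall s, s \in S :\ s1 -> c s = 0.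
Proof.
move=> indep c Hc s sS1.
pose a g := if g == s1 then - \sum_(t in S :\ s1) c t else c g.
have aE g : g \in S :\ s1 -> a g = c g by rewrite /a in_setD1 => /andP[/negPf ->].
rewrite -aE //; apply: indep (subsetP (subD1set S s1) s sS1).
  by rewrite (big_setD1 s1 s1S) /= (eq_bigr c aE) /a eqxx addNr.
rewrite (big_setD1 s1 s1S) /= (eq_bigr (fun g => c g *: pm g)); last by move=> g /aE ->.
by rewrite /a eqxx -[RHS]Hc sum_scale_diff scaleNr addrC.
Qed.

Hypothesis combS : forall g, g \in G -> int_affine_comb S (pm g).

Lemma pmxB_int_span g : g \in G ->
  exists z, pm g - pm s1 = \sum_(s in S :\ s1) (z s)%:~R *: (pm s - pm s1).
Proof.
move=> /combS[z [z1 ->]]; exists z.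
have := sum_scale_diff S (fun s => (z s)%:~R) (pm s1).
rewrite -intr_sum z1 scale1r => <-.
by rewrite (big_setD1 s1 s1S) /= subrr scaler0 add0r.
Qed.

Lemma lin_lattice_int_span M : lin_lattice G M ->
  exists z, M = \sum_(s in S :\ s1) (z s)%:~R *: (pm s - pm s1).
Proof.
move=> [z [z0 ->]].
have := sum_scale_diff G (fun g => (z g)%:~R) (pm s1).
rewrite -intr_sum z0 scale0r subr0 => <-.
apply: (big_ind (fun M => exists w, M = _)).
- by exists (fun _ => 0); rewrite big1 // => s _; rewrite scale0r.
- move=> _ _ [w1 ->] [w2 ->]; exists (fun s => w1 s + w2 s).
  by rewrite -big_split; apply: eq_bigr => s _; rewrite intrD scalerDl.
- move=> g /pmxB_int_span[w ->]; exists (fun s => z g * w s).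
  by rewrite scaler_sumr; apply: eq_bigr => s _; rewrite scalerA intrM.
Qed.

End Unimodular.

Lemma unimodular_of_int_affine_combs G S s1 : S \subset G -> s1 \in S ->
  aff_indep R S -> (forall g, g \in G -> int_affine_comb S (pm g)) ->
  unimodular R G S.
Proof.
move=> sSG s1S indep combS; exists s1 => //; split; [|split].
- move=> s sS; exact: lin_lattice_pmxB sSG s1S _ (subsetP sSG s sS).
- move=> z Hz s sS1; apply/eqP; rewrite -(intr_eq0 R); apply/eqP.
  exact: (aff_indep_diff_free s1S indep Hz).
- exact: lin_lattice_int_span.
Qed.

End AffineLattice.

Section DihedralGroup.
Variable m : nat.
Local Notation n := m.+3.
Local Notation I := 'I_n.
Implicit Types a b c : I.

Definition rotation a : 'S_n := perm (@addIr _ a).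
Definition reflection a : 'S_n := perm (@subrI _ a).

Lemma rotationE a x : rotation a x = x + a. Proof. by rewrite permE. Qed.
Lemma reflectionE a x : reflection a x = a - x. Proof. by rewrite permE. Qed.

Lemma rotationM a b : (rotation a * rotation b)%g = rotation (a + b).
Proof. by apply/permP => x; rewrite permM !rotationE addrA. Qed.
Lemma rotation_reflectionM a b : (rotation a * reflection b)%g = reflection (b - a).
Proof. by apply/permP => x; rewrite permM rotationE !reflectionE; ring. Qed.
Lemma reflection_rotationM a b : (reflection a * rotation b)%g = reflection (a + b).
Proof. by apply/permP => x; rewrite permM rotationE !reflectionE; ring. Qed.
Lemma reflectionM a b : (reflection a * reflection b)%g = rotation (b - a).
Proof. by apply/permP => x; rewrite permM rotationE !reflectionE; ring. Qed.

Lemma rotation0 : rotation 0 = 1%g.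
Proof. by apply/permP => x; rewrite rotationE perm1 addr0. Qed.

Lemma rotation1X k : (rotation 1%R ^+ k)%g = rotation k%:R.
Proof.
elim: k => [|k IHk]; first by rewrite expg0 rotation0.
by rewrite expgSr IHk rotationM -mulrSr.
Qed.

Definition rotations := [set rotation a | a : I].
Definition reflections := [set reflection a | a : I].
Definition dihedral_set := rotations :|: reflections.

Lemma rotation_dihedral a : rotation a \in dihedral_set.
Proof. by rewrite inE imset_f. Qed.
Lemma reflection_dihedral a : reflection a \in dihedral_set.
Proof. by rewrite inE imset_f ?orbT. Qed.

Lemma group_set_dihedral : group_set dihedral_set.
Proof.
apply/andP; split; first by rewrite -rotation0 rotation_dihedral.
apply/subsetP => _ /mulsgP[x y Hx Hy ->].
by case/setUP: Hx => /imsetP[a _ ->]; case/setUP: Hy => /imsetP[b _ ->];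
  rewrite ?rotationM ?rotation_reflectionM ?reflection_rotationM ?reflectionM
          ?rotation_dihedral ?reflection_dihedral.
Qed.
Canonical dihedral_group := Group group_set_dihedral.

Lemma rot_permE : rot_perm n = rotation 1.
Proof.
apply/permP => x; rewrite rotationE permE; apply/val_inj => /=.
by rewrite modnDmr addn1.
Qed.

Lemma flip_permE : flip_perm n = reflection (-1).
Proof.
apply/permP => x; rewrite reflectionE permE; apply/eqP.
rewrite -(subr_eq0 (rev_ord x)) opprB addrA subr_eq0 eq_sym; apply/eqP/val_inj => /=.
rewrite (modn_small (_ : 1 < n)%N) //; congr (_ %% n)%N.
by have := ltn_ord x; lia.
Qed.

Lemma dihedralE : dihedral n = dihedral_set :> {set 'S_n}.
Proof.
apply/eqP; rewrite eqEsubset; apply/andP; split.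
  rewrite gen_subG; apply/subsetP => x /set2P[]->.
    by rewrite rot_permE rotation_dihedral.
  by rewrite flip_permE reflection_dihedral.
apply/subsetP => _ /setUP[] /imsetP[a _ ->].
  by rewrite -(natr_Zp a) -rotation1X -rot_permE groupX ?mem_gen ?set21.
have -> : reflection a = (flip_perm n * rot_perm n ^+ (a + 1)%R)%g.
  rewrite rot_permE rotation1X natr_Zp flip_permE reflection_rotationM.
  by congr reflection; ring.
by rewrite groupM ?groupX ?mem_gen ?set21 ?set22.
Qed.

Lemma rotation_neq_reflection a c : rotation a != reflection c.
Proof.
apply/eqP => /permP eq_ac; have := eq_ac 0; have := eq_ac 1.
rewrite !rotationE !reflectionE add0r subr0 => eq1 eq0; subst c.
have : (2 : I) = (1 + a) - (a - 1) by ring.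
by rewrite eq1 subrr => /(congr1 val).
Qed.

Lemma dihedral_set_mapsto g i j : g \in dihedral_set -> g i = j ->
  g = rotation (j - i) \/ g = reflection (i + j).
Proof.
by case/setUP => /imsetP[a _ ->]; rewrite ?rotationE ?reflectionE => <-;
  [left|right]; congr (_ _); ring.
Qed.

Definition coset2 a : pred I := fun x => [exists k, x == a + k + k].

Lemma coset2_refl a : coset2 a a.
Proof. by apply/existsP; exists 0; rewrite !addr0. Qed.

Lemma coset2_sym a i j : coset2 a (j - i) = coset2 a (i + j).
Proof.
apply/existsP/existsP => -[k /eqP E]; [exists (k + i)|exists (k - i)]; apply/eqP.
  have -> : i + j = j - i + i + i by ring.
  by rewrite E; ring.
have -> : j - i = i + j - i - i by ring.
by rewrite E; ring.
Qed.

End DihedralGroup.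

Section DihedralPolytope.
Variables (R : realType) (m : nat).
Local Notation n := m.+3.
Local Notation I := 'I_n.
Local Notation D := (dihedral_set m).
Local Notation pm := (pmx R).
Implicit Types (a c : I) (b : 'S_n -> R) (S : {set 'S_n}).

Definition dihedral_height (g : 'S_n) : R := (g \in rotations m)%:R.

Lemma dihedral_height_rotation a : dihedral_height (rotation a) = 1.
Proof. by rewrite /dihedral_height imset_f. Qed.

Lemma dihedral_height_reflection c : dihedral_height (reflection c) = 0.
Proof.
rewrite /dihedral_height; case: imsetP => // -[a _ /eqP].
by rewrite eq_sym (negPf (rotation_neq_reflection a c)).
Qed.

Lemma sum_rotation_pmx (p : pred I) i j :
  (\sum_(a | p a) pm (rotation a)) i j = (p (j - i))%:R.
Proof.
rewrite summxE -sum_indicator; apply: eq_bigr => a _.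
by rewrite pmxE rotationE (addrC i) eq_sym -subr_eq eq_sym.
Qed.

Lemma sum_reflection_pmx (p : pred I) i j :
  (\sum_(a | p a) pm (reflection a)) i j = (p (i + j))%:R.
Proof.
rewrite summxE -sum_indicator; apply: eq_bigr => a _.
by rewrite pmxE reflectionE subr_eq (addrC j).
Qed.

Lemma lower_cell_misses_rotation S (p : pred I) a0 :
  lower_cell D dihedral_height S -> (forall i j, p (j - i) = p (i + j)) -> p a0 ->
  exists2 a, p a & rotation a \notin S.
Proof.
move=> [_ [C [c0 HC]]] p_sym pa0.
case: (pickP (fun a => p a && (rotation a \notin S))) => [a /andP[]|all_in].
  by exists a.
have sum_rot : \sum_(a | p a) affine_fun C c0 (pm (rotation a)) = \sum_(a | p a) 1.
  apply: eq_bigr => a pa; rewrite -(dihedral_height_rotation a).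
  apply/(HC _ (rotation_dihedral a)).2.
  by move: (all_in a); rewrite pa => /negbFE.
have sum_ref : \sum_(a | p a) affine_fun C c0 (pm (reflection a)) <= 0.
  apply: sumr_le0 => a _; rewrite -(dihedral_height_reflection a).
  exact: (HC _ (reflection_dihedral a)).1.
have sum_pos : 0 < \sum_(a | p a) (1 : R).
  by rewrite (bigD1 a0) //= ltr_pwDl // sumr_ge0.
have sum_pmx : \sum_(a | p a) pm (rotation a) = \sum_(a | p a) pm (reflection a).
  by apply/matrixP => i j; rewrite sum_rotation_pmx sum_reflection_pmx p_sym.
rewrite sum_affine_fun -sum_pmx -sum_affine_fun sum_rot in sum_ref.
by move: sum_pos; rewrite ltNge sum_ref.
Qed.

Section Dependence.
Variable b : 'S_n -> R.
Hypothesis dep_b : \sum_(g in D) b g *: pm g = 0.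

Lemma dependence_entry i j : b (rotation (j - i)) + b (reflection (i + j)) = 0.
Proof.
have := congr1 (fun M : 'M[R]_n => M i j) dep_b; rewrite /= mxE summxE => <-.
rewrite (bigD1 (rotation (j - i))) ?rotation_dihedral //=.
rewrite (bigD1 (reflection (i + j))) /=; last first.
  by rewrite reflection_dihedral eq_sym rotation_neq_reflection.
rewrite big1 => [|g /andP[/andP[gD g_rot] g_ref]].
  by rewrite addr0 !mxE rotationE reflectionE subrKC (addrC i j) addrK eqxx !mulr1.
rewrite !mxE; case: eqP => [/(dihedral_set_mapsto gD)|]; last by rewrite mulr0.
by case=> g_eq; [move: g_rot|move: g_ref]; rewrite g_eq eqxx.
Qed.

Lemma dependence_reflection c : b (reflection c) = - b (rotation c).
Proof.
by apply/eqP; rewrite -addr_eq0 addrC -{1}(subr0 c) -{2}(add0r c) dependence_entry.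
Qed.

Lemma dependence_rotation_sym i j : b (rotation (j - i)) = b (rotation (i + j)).
Proof.
have := dependence_entry i j; rewrite dependence_reflection.
by move=> /eqP; rewrite subr_eq0 => /eqP.
Qed.

Lemma dependence_rotation_coset2 a x : coset2 a x -> b (rotation x) = b (rotation a).
Proof.
move=> /existsP[k /eqP ->]; have := dependence_rotation_sym k (a + k).
by rewrite addrK => ->; congr (b (rotation _)); ring.
Qed.

End Dependence.

Lemma lower_cell_rotation_representative S a : lower_cell D dihedral_height S ->
  exists2 a', rotation a' \notin S &
    forall b, \sum_(g in D) b g *: pm g = 0 -> b (rotation a) = b (rotation a').
Proof.
move=> cellS.
have [a' a_a' a'S] := lower_cell_misses_rotation cellS (@coset2_sym m a) (coset2_refl a).
by exists a' => // b dep_b; rewrite (dependence_rotation_coset2 dep_b a_a').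
Qed.

Lemma regular_triangulation_dihedral : regular_triangulation D dihedral_height.
Proof.
(* Cells are even linearly independent: the coefficient sum is not needed. *)
move=> S cellS a _ dep_a g gS; have sSD : S \subset D by case: cellS.
pose b y := if y \in S then a y else 0.
have dep_b : \sum_(y in D) b y *: pm y = 0.
  rewrite -[RHS]dep_a -(sum_if_mem (fun y => a y *: pm y) (subsetP sSD)).
  by apply: eq_bigr => y _; rewrite /b; case: ifP; rewrite ?scale0r.
have b_rot c : b (rotation c) = 0.
  have [a' a'S /(_ b dep_b) ->] := lower_cell_rotation_representative c cellS.
  by rewrite /b (negPf a'S).
have <- : b g = a g by rewrite /b gS.
case/setUP: (subsetP sSD g gS) => /imsetP[c _ ->]; first exact: b_rot.
by rewrite (dependence_reflection dep_b) b_rot oppr0.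
Qed.

Lemma int_affine_comb_dihedral S x : lower_cell D dihedral_height S ->
  spans_aff_hull R D S -> x \in D -> int_affine_comb S (pm x).
Proof.
move=> cellS spanS xD; have sSD : S \subset D by case: cellS.
have [a [a1 aE]] := spanS x xD.
pose b y := (if y \in S then a y else 0) - (y == x)%:R.
have dep_b : \sum_(y in D) b y *: pm y = 0.
  rewrite (eq_bigr (fun y => (if y \in S then a y *: pm y else 0) -
                             (if y == x then pm y else 0))); last first.
    by move=> y _; rewrite /b scalerBl; case: ifP; case: eqP; rewrite ?scale0r ?scale1r.
  by rewrite sumrB (sum_if_mem _ (subsetP sSD)) sum_if_eq // -aE subrr.
have b_int y : y \in D -> b y \is a Num.int.
  have b_rot c : b (rotation c) \is a Num.int.
    have [a' a'S /(_ b dep_b) ->] := lower_cell_rotation_representative c cellS.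
    by rewrite /b (negPf a'S) sub0r rpredN rpred_nat.
  case/setUP => /imsetP[c _ ->]; first exact: b_rot.
  by rewrite (dependence_reflection dep_b) rpredN.
have a_int s : s \in S -> (Num.floor (a s))%:~R = a s.
  move=> sS; apply/eqP; rewrite -intrEfloor -(subrK (s == x)%:R (a s)).
  by rewrite rpredD ?rpred_nat //; have := b_int s (subsetP sSD s sS); rewrite /b sS.
exists (fun s => Num.floor (a s)); split.
  by apply: (@intr_inj R); rewrite intr_sum (eq_bigr _ a_int) a1.
by rewrite aE; apply: eq_bigr => s /a_int ->.
Qed.

End DihedralPolytope.

Theorem proposition3 (R : realType) (n : nat) : (2 < n)%N ->
  exists h : 'S_n -> R,
    regular_triangulation (dihedral n) h /\
    (forall S : {set 'S_n},
       lower_cell (dihedral n) h S ->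
       spans_aff_hull R (dihedral n) S ->
       unimodular R (dihedral n) S).
Proof.
case: n => [|[|[|m]]] // _.
exists (@dihedral_height R m); rewrite dihedralE.
split=> [|S cellS spanS]; first exact: regular_triangulation_dihedral.
have [s1 s1S] := spans_aff_hull_nonempty (group1 (dihedral_group m)) spanS.
apply: (unimodular_of_int_affine_combs _ s1S); first by case: cellS.
  exact: regular_triangulation_dihedral cellS.
by move=> g; apply: int_affine_comb_dihedral.
Qed.
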